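(* Let $\mathfrak{S}=(\mathcal{X},\mathsf{S},\gamma,(\Lambda_{a})_{a\in\mathcal{A}})$ be a spectral decomposition system for the Euclidean space $\mathfrak{H}$, let $\varphi\colon\mathcal{X}\to\left]-\infty,+\infty\right]$ be proper, convex, and $\mathsf{S}$-invariant, and let $X\in\mathfrak{H}$. Then $\varphi\circ\gamma$ is differentiable at $X$ if and only if $\varphi$ is differentiable at $\gamma(X)$, in which case $\gamma(\nabla(\varphi\circ\gamma)(X))=\nabla\varphi(\gamma(X))$ and $\nabla(\varphi\circ\gamma)(X)=\Lambda_a(\nabla\varphi(\gamma(X)))$ for every $a\in\mathcal{A}_X$.
   Context: A Euclidean space is a finite-dimensional real inner product space; inner products are written $\langle\cdot,\cdot\rangle$ and norms $\|\cdot\|$. Let $\mathfrak{H}$ and $\mathcal{X}$ be Euclidean spaces, let $\mathsf{S}$ be a group acting on $\mathcal{X}$ by linear isometries, let $\gamma\colon\mathfrak{H}\to\mathcal{X}$, and let $(\Lambda_a)_{a\in\mathcal{A}}$ be a family of linear operators from $\mathcal{X}$ to $\mathfrak{H}$. The orbit of $x$ is $\mathsf{S}\cdot x=\{s\cdot x: s\in\mathsf{S}\}$; a map $f$ on $\mathcal{X}$ is $\mathsf{S}$-invariant if $f(s\cdot x)=f(x)$ for all $s,x$. The tuple is a spectral decomposition system for $\mathfrak{H}$ if: [A] every $\Lambda_a$ is an isometry; [B] there exists an $\mathsf{S}$-invariant $\tau\colon\mathcal{X}\to\mathcal{X}$ with $\tau(x)\in\mathsf{S}\cdot x$ for all $x$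 and $\gamma\circ\Lambda_a=\tau$ for all $a$; [C] for every $X\in\mathfrak{H}$ there is $a$ with $X=\Lambda_a\gamma(X)$; [D] $\langle X,Y\rangle\leq\langle\gamma(X),\gamma(Y)\rangle$ for all $X,Y\in\mathfrak{H}$. For $X\in\mathfrak{H}$, $\mathcal{A}_X=\{a\in\mathcal{A}: X=\Lambda_a\gamma(X)\}$. A function is proper if it never takes $-\infty$ and is finite somewhere; it is convex if the convexity inequality holds on its domain $\{f<+\infty\}$. *)

From HB Require Import structures.
From mathcomp Require Import all_boot all_order all_algebra.
From mathcomp Require Import reals constructive_ereal.
Set Implicit Arguments. Unset Strict Implicit. Unset Printing Implicit Defensive.
Import Order.TTheory GRing.Theory Num.Theory.
Local Open Scope ring_scope.

Section Defs.
Variable R : realType.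

(* An inner product on a real vector space.  A Euclidean space is a
   finite-dimensional (vectType) real vector space with such a product. *)
Definition inner_product (V : lmodType R) (ip : V -> V -> R) : Prop :=
  [/\ (forall x y, ip x y = ip y x),
      (forall (a : R) x y z, ip (a *: x + y) z = (a * ip x z + ip y z)%R),
      (forall x, (0 <= ip x x)%R) &
      (forall x, ip x x = 0%R -> x = 0)].

Definition ipnorm (V : lmodType R) (ip : V -> V -> R) (x : V) : R :=
  Num.sqrt (ip x x).

Definition is_linear_map (U V : lmodType R) (f : U -> V) : Prop :=
  forall (a : R) x y, f (a *: x + y) = a *: f x + f y.

Definition is_linear_isometry (U V : lmodType R) (ipU : U -> U -> R)
  (ipV : V -> V -> R) (f : U -> V) : Prop :=
  is_linear_map f /\ forall x, ipnorm ipV (f x) = ipnorm ipU x.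

Definition is_group (G : Type) (mul : G -> G -> G) (one : G) (inv : G -> G)
  : Prop :=
  [/\ (forall s t u, mul s (mul t u) = mul (mul s t) u),
      (forall s, mul one s = s) &
      (forall s, mul (inv s) s = one)].

Definition isometric_linear_action (G : Type) (mul : G -> G -> G) (one : G)
  (X : lmodType R) (ipX : X -> X -> R) (act : G -> X -> X) : Prop :=
  [/\ (forall x, act one x = x),
      (forall s t x, act (mul s t) x = act s (act t x)) &
      (forall s, is_linear_isometry ipX ipX (act s))].

Definition in_orbit (G : Type) (X : Type) (act : G -> X -> X) (x y : X) : Prop :=
  exists s, y = act s x.

Definition s_invariant (G : Type) (X : Type) (T : Type) (act : G -> X -> X)
  (f : X -> T) : Prop :=
  forall s x, f (act s x) = f x.

(* Spectral decomposition system (X, S, gamma, (Lambda_a)_a) for H: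
   conditions [A]-[D]. *)
Definition spectral_decomposition_system (H X : lmodType R)
  (ipH : H -> H -> R) (ipX : X -> X -> R) (G : Type) (act : G -> X -> X)
  (gamma : H -> X) (A : Type) (Lambda : A -> X -> H) : Prop :=
  [/\ (forall a, is_linear_isometry ipX ipH (Lambda a)),
      (exists tau : X -> X,
          [/\ s_invariant act tau,
              (forall x, in_orbit act x (tau x)) &
              (forall a x, gamma (Lambda a x) = tau x)]),
      (forall Y : H, exists a, Y = Lambda a (gamma Y)) &
      (forall Y Z : H, (ipH Y Z <= ipX (gamma Y) (gamma Z))%R)].

Definition proper_fun (X : Type) (f : X -> \bar R) : Prop :=
  (forall x, f x != -oo%E) /\ exists x, (f x < +oo)%E.

Definition convex_fun (X : lmodType R) (f : X -> \bar R) : Prop :=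
  forall x y (t : R), (f x < +oo)%E -> (f y < +oo)%E -> (0 <= t <= 1)%R ->
    (f (t *: x + (1 - t) *: y)%R <= t%:E * f x + (1 - t)%:E * f y)%E.

Definition is_gradient (V : lmodType R) (ip : V -> V -> R) (f : V -> \bar R)
  (x g : V) : Prop :=
  forall eps : R, (0 < eps)%R ->
    exists2 delta : R, (0 < delta)%R &
      forall h, (ipnorm ip h < delta)%R ->
        exists r0 r : R, [/\ f x = r0%:E, f (x + h) = r%:E &
          (`|r - r0 - ip g h| <= eps * ipnorm ip h)%R].

Definition differentiable_at (V : lmodType R) (ip : V -> V -> R)
  (f : V -> \bar R) (x : V) : Prop :=
  exists g, is_gradient ip f x g.

End Defs.

(* A gradient [g] of the convex function [phi] at [gamma x] is a subgradient,
   and so is [tau g], by condition [D] and the invariance of [phi]; uniqueness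
   of the subgradient at a point of differentiability gives [tau g = g].  Then
   [D] makes [Lambda_a g] a subgradient of [phi o gamma] at [x], which is the
   lower bound.  For the upper bound write [x + h = Lambda_b (gamma (x + h))]:
   the expansion of [phi] at [gamma x] bounds the increment by
   [<Lambda_b g, h>], and testing [phi o gamma] at [x - t Lambda_a g] shows
   that [Lambda_b g] tends to [Lambda_a g] as [h] tends to [0].  Conversely, a
   gradient of [phi o gamma] at [x] yields one of [phi = phi o gamma o Lambda_a]
   at [gamma x] through the adjoint of [Lambda_a] (Riesz representation). *)

From Pilot Require Import Defs.
From HB Require Import structures.
From mathcomp Require Import all_boot all_order all_algebra.
From mathcomp Require Import reals constructive_ereal.
From mathcomp Require Import ring lra.
Import Order.TTheory GRing.Theory Num.Theory.
Local Open Scope ring_scope.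

Set Implicit Arguments.
Unset Strict Implicit.
Unset Printing Implicit Defensive.

Definition is_subgradient (R : realType) (V : lmodType R) (ip : V -> V -> R)
    (f : V -> \bar R) (x g : V) : Prop :=
  forall y, (f x + (ip g (y - x))%:E <= f y)%E.

Section InnerProduct.
Variables (R : realType) (V : lmodType R) (ip : V -> V -> R).
Hypothesis ipV : inner_product ip.

Lemma ipC x y : ip x y = ip y x.
Proof. by have [] := ipV. Qed.

Lemma ipDl x y z : ip (x + y) z = ip x z + ip y z.
Proof. by have [_ ipl _ _] := ipV; rewrite -[x]scale1r ipl mul1r scale1r. Qed.

Lemma ip0l z : ip 0 z = 0.
Proof. by apply: (addrI (ip 0 z)); rewrite -ipDl !addr0. Qed.

Lemma ipZl a x z : ip (a *: x) z = a * ip x z.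
Proof. by have [_ ipl _ _] := ipV; rewrite -[a *: x]addr0 ipl ip0l addr0. Qed.

Lemma ipNl x z : ip (- x) z = - ip x z.
Proof. by rewrite -scaleN1r ipZl mulN1r. Qed.

Lemma ipBl x y z : ip (x - y) z = ip x z - ip y z.
Proof. by rewrite ipDl ipNl. Qed.

Lemma ipDr x y z : ip z (x + y) = ip z x + ip z y.
Proof. by rewrite !(ipC z) ipDl. Qed.

Lemma ipZr a x z : ip z (a *: x) = a * ip z x.
Proof. by rewrite !(ipC z) ipZl. Qed.

Lemma ip0r z : ip z 0 = 0.
Proof. by rewrite ipC ip0l. Qed.

Lemma ipNr x z : ip z (- x) = - ip z x.
Proof. by rewrite !(ipC z) ipNl. Qed.

Lemma ipBr x y z : ip z (x - y) = ip z x - ip z y.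
Proof. by rewrite ipDr ipNr. Qed.

Lemma ipxx_ge0 x : 0 <= ip x x.
Proof. by have [] := ipV. Qed.

Lemma ipxx_eq0 x : ip x x = 0 -> x = 0.
Proof. by have [_ _ _] := ipV; apply. Qed.

Lemma ipnorm_ge0 x : 0 <= ipnorm ip x.
Proof. exact: sqrtr_ge0. Qed.

Lemma ipnorm_sqr x : ipnorm ip x ^+ 2 = ip x x.
Proof. by rewrite sqr_sqrtr // ipxx_ge0. Qed.

Lemma ipnorm0 : ipnorm ip 0 = 0.
Proof. by rewrite /ipnorm ip0l sqrtr0. Qed.

Lemma ipnormZ a x : ipnorm ip (a *: x) = `|a| * ipnorm ip x.
Proof.
by rewrite /ipnorm ipZl ipZr mulrA -expr2 sqrtrM ?sqrtr_sqr // sqr_ge0.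
Qed.

Lemma cauchy_schwarz u v : ip u v <= ipnorm ip u * ipnorm ip v.
Proof.
set a := ipnorm ip u; set b := ipnorm ip v.
have a_ge0 : 0 <= a := ipnorm_ge0 u; have b_ge0 : 0 <= b := ipnorm_ge0 v.
have [a0|a_neq0] := eqVneq a 0.
  have /ipxx_eq0 -> : ip u u = 0 by rewrite -ipnorm_sqr -/a a0 expr0n.
  by rewrite ip0l mulr_ge0.
have [b0|b_neq0] := eqVneq b 0.
  have /ipxx_eq0 -> : ip v v = 0 by rewrite -ipnorm_sqr -/b b0 expr0n.
  by rewrite ip0r mulr_ge0.
have ab_gt0 : 0 < a * b by rewrite mulr_gt0 // lt0r ?a_neq0 ?b_neq0.
have := ipxx_ge0 (b *: u - a *: v).
rewrite !ipBl !ipBr !ipZl !ipZr (ipC v u) -!ipnorm_sqr -/a -/b => sq_ge0.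
have : a * b * ip u v <= a * b * (a * b) by nra.
by rewrite ler_pM2l.
Qed.

Lemma ip_small_eq0 w :
  (forall eps, 0 < eps -> exists2 delta, 0 < delta &
     forall h, ipnorm ip h < delta -> ip w h <= eps * ipnorm ip h) -> w = 0.
Proof.
move=> w_small; apply: ipxx_eq0; rewrite -ipnorm_sqr.
set n := ipnorm ip w; have n_ge0 : 0 <= n := ipnorm_ge0 w.
have [->|n_neq0] := eqVneq n 0; first by rewrite expr0n.
have n_gt0 : 0 < n by rewrite lt0r n_neq0.
have [delta delta_gt0 Hdelta] := w_small (n / 2) (divr_gt0 n_gt0 (ltr0Sn _ 1)).
pose t := delta / (2 * (n + 1)).
have t_gt0 : 0 < t by rewrite divr_gt0 // mulr_gt0 // ltr_wpDl.
have ht : t * (2 * (n + 1)) = delta.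
  by rewrite divfK // gt_eqF ?mulr_gt0 ?ltr_wpDl.
have := Hdelta (t *: w); rewrite ipnormZ gtr0_norm // ipZr -ipnorm_sqr -/n.
have tn_lt : t * n < delta by nra.
move=> /(_ tn_lt); nra.
Qed.

Lemma ip_suml n (F : 'I_n -> V) z :
  ip (\sum_(i < n) F i) z = \sum_(i < n) ip (F i) z.
Proof. by apply: (big_morph (ip^~ z)) => [u v|]; rewrite ?ipDl ?ip0l. Qed.

Section Gradient.
Variable f : V -> \bar R.

Lemma gradient_fin x g : is_gradient ip f x g -> exists r, f x = r%:E.
Proof.
move=> grad_g; have [delta delta_gt0 Hdelta] := grad_g 1 ltr01.
have [r0 [_ [fx _ _]]] := Hdelta 0 ltac:(by rewrite ipnorm0).
by exists r0.
Qed.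

Lemma gradient_subgradient x g :
  (forall y, f y != -oo%E) -> convex_fun f ->
  is_gradient ip f x g -> is_subgradient ip f x g.
Proof.
move=> f_ninfty f_convex grad_g y.
have [r0 fx] := gradient_fin grad_g.
rewrite fx -EFinD.
case fy: (f y) => [r| |]; [|exact: leey|by have := f_ninfty y; rewrite fy].
rewrite lee_fin; set d := y - x; set nd := ipnorm ip d.
have nd_ge0 : 0 <= nd := ipnorm_ge0 d.
apply/ler_addgt0Pr => e e_gt0.
pose eps := e / (nd + 1).
have eps_gt0 : 0 < eps by rewrite divr_gt0 // ltr_wpDl.
have heps : eps * (nd + 1) = e by rewrite divfK // gt_eqF // ltr_wpDl.
have [delta delta_gt0 Hdelta] := grad_g eps eps_gt0.
pose t := delta / (delta + nd).
have t_gt0 : 0 < t by rewrite divr_gt0 // ltr_wpDr.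
have ht : t * (delta + nd) = delta by rewrite divfK // gt_eqF // ltr_wpDr.
have t_le1 : t <= 1 by nra.
have td_small : ipnorm ip (t *: d) < delta.
  by rewrite ipnormZ gtr0_norm // -/nd; nra.
have [r0' [r1 [fx' fxtd approx]]] := Hdelta _ td_small.
move: fx'; rewrite fx => -[r0E]; subst r0'.
have := f_convex y x t; rewrite fy fx !ltry => /(_ isT isT).
rewrite t_le1 ltW // => /(_ isT).
have -> : t *: y + (1 - t) *: x = x + t *: d.
  by rewrite /d scalerBr scalerBl scale1r addrCA.
rewrite fxtd -!EFinM -EFinD lee_fin => convex_ineq.
move: approx; rewrite ipZr ipnormZ (gtr0_norm t_gt0) -/nd ler_norml.
move=> /andP[approx _].
have eps_nd : eps * nd <= e by nra.
have : t * (r0 + ip g d) <= t * (r + e) by nra.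
by rewrite ler_pM2l.
Qed.

Lemma subgradient_gradient x g v :
  is_gradient ip f x g -> is_subgradient ip f x v -> v = g.
Proof.
move=> grad_g sub_v; apply/eqP; rewrite -subr_eq0; apply/eqP.
apply: ip_small_eq0 => eps eps_gt0.
have [delta delta_gt0 Hdelta] := grad_g eps eps_gt0.
exists delta => // h h_small.
have [r0 [r [fx fxh approx]]] := Hdelta h h_small.
have := sub_v (x + h); rewrite fx fxh (addrC x) addrK -EFinD lee_fin.
move: approx; rewrite ler_norml ipBl => /andP[_ approx]; lra.
Qed.

Lemma gradient_uniq x g1 g2 :
  is_gradient ip f x g1 -> is_gradient ip f x g2 -> g1 = g2.
Proof.
move=> grad_g1 grad_g2; apply/eqP; rewrite -subr_eq0; apply/eqP.
apply: ip_small_eq0 => eps eps_gt0.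
have eps2_gt0 : 0 < eps / 2 by rewrite divr_gt0.
have [d1 d1_gt0 Hd1] := grad_g1 _ eps2_gt0.
have [d2 d2_gt0 Hd2] := grad_g2 _ eps2_gt0.
exists (Order.min d1 d2) => [|h]; first by rewrite lt_min d1_gt0.
rewrite lt_min => /andP[h_small1 h_small2].
have [a0 [a1 [fx fxh approx1]]] := Hd1 h h_small1.
have [b0 [b1 [fx' fxh' approx2]]] := Hd2 h h_small2.
move: fx' fxh'; rewrite fx fxh => -[b0E] [b1E]; subst b0 b1.
move: approx1 approx2; rewrite !ler_norml ipBl => /andP[? _] /andP[_ ?]; lra.
Qed.

End Gradient.
End InnerProduct.

Section Riesz.
Variables (R : realType) (V : vectType R) (ip : V -> V -> R).
Hypothesis ipV : inner_product ip.

Lemma riesz_representation (l : V -> R) :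
  (forall a x y, l (a *: x + y) = a * l x + l y) ->
  exists g, forall k, ip g k = l k.
Proof.
move=> l_lin.
have l0 : l 0 = 0 by have := l_lin 1 0 0; rewrite scale1r addr0 mul1r; lra.
have lZ a x : l (a *: x) = a * l x by rewrite -[a *: x]addr0 l_lin l0 addr0.
have lD x y : l (x + y) = l x + l y by rewrite -[x]scale1r l_lin mul1r scale1r.
set n := \dim (fullv : {vspace V}); set e := vbasis (fullv : {vspace V}).
pose gram : 'M[R]_n := \matrix_(i, j) ip e`_i e`_j.
have ip_comb (v : 'rV[R]_n) (j : 'I_n) :
    ip (\sum_(i < n) v 0 i *: e`_i) e`_j = (v *m gram) 0 j.
  by rewrite ip_suml // mxE; apply: eq_bigr => i _; rewrite ipZl // mxE.
have gram_unit : gram \in unitmx.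
  rewrite -row_free_unit; apply: inj_row_free => v v_gram.
  set w := \sum_(i < n) v 0 i *: e`_i.
  have w0 : w = 0.
    apply: (ipxx_eq0 ipV); rewrite {2}/w (ipC ipV w) ip_suml //.
    by apply: big1 => i _; rewrite ipZl // ipC // ip_comb v_gram mxE mulr0.
  have /freeP/(_ _ w0) v0 := basis_free (vbasisP (fullv : {vspace V})).
  by apply/rowP => j; rewrite v0 mxE.
pose d := (\row_j l e`_j) *m invmx gram.
exists (\sum_(i < n) d 0 i *: e`_i) => k.
have k_coord := coord_vbasis (memvf k).
rewrite {2}k_coord (big_morph l lD l0) (ipC ipV) {1}k_coord ip_suml //.
apply: eq_bigr => j _; rewrite ipZl // lZ; congr (_ * _).
by rewrite ipC // ip_comb /d mulmxKV // mxE.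
Qed.

End Riesz.

Section LinearMap.
Variables (R : realType) (U V : lmodType R) (f : U -> V).
Hypothesis f_lin : is_linear_map f.

Lemma linear_map0 : f 0 = 0.
Proof.
apply: (addrI (f 0)).
by have := f_lin 1 0 0; rewrite scale1r addr0 scale1r addr0.
Qed.

Lemma linear_mapD x y : f (x + y) = f x + f y.
Proof. by rewrite -[x]scale1r f_lin !scale1r. Qed.

Lemma linear_mapZ a x : f (a *: x) = a *: f x.
Proof. by rewrite -[a *: x]addr0 f_lin linear_map0 addr0. Qed.

End LinearMap.

Lemma isometry_ip (R : realType) (U V : lmodType R) (ipU : U -> U -> R)
    (ipV : V -> V -> R) (f : U -> V) :
  inner_product ipU -> inner_product ipV -> is_linear_isometry ipU ipV f ->
  forall x y, ipV (f x) (f y) = ipU x y.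
Proof.
move=> hU hV [f_lin f_norm] x y.
have sq z : ipV (f z) (f z) = ipU z z by rewrite -!ipnorm_sqr // f_norm.
have := sq (x + y); rewrite linear_mapD // !ipDl // !ipDr // !sq.
by rewrite (ipC hV (f y)) (ipC hU y); lra.
Qed.

Lemma group_mulV (G : Type) (mul : G -> G -> G) (one : G) (inv : G -> G) :
  is_group mul one inv -> forall s, mul s (inv s) = one.
Proof.
move=> [mulA mul1g mulVg] s.
rewrite -[mul s (inv s)]mul1g -(mulVg (inv s)) -mulA.
rewrite [mul (inv s) (mul s _)]mulA.
by rewrite mulVg mul1g.
Qed.

Lemma actKV (R : realType) (X : lmodType R) (ipX : X -> X -> R) (G : Type)
    (mul : G -> G -> G) (one : G) (inv : G -> G) (act : G -> X -> X) :
  is_group mul one inv -> isometric_linear_action mul one ipX act ->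
  forall s y, act s (act (inv s) y) = y.
Proof. by move=> hG [act1 actM _] s y; rewrite -actM (group_mulV hG) act1. Qed.

Section SpectralDecomposition.
Variables (R : realType) (H : lmodType R) (X : vectType R).
Variables (ipH : H -> H -> R) (ipX : X -> X -> R).
Hypotheses (hH : inner_product ipH) (hX : inner_product ipX).
Variables (G : Type) (mul : G -> G -> G) (one : G) (inv : G -> G).
Variable act : G -> X -> X.
Hypotheses (hG : is_group mul one inv)
  (hact : isometric_linear_action mul one ipX act).
Variables (gamma : H -> X) (A : Type) (Lambda : A -> X -> H) (tau : X -> X).
Hypotheses (Lambda_iso : forall a, is_linear_isometry ipX ipH (Lambda a))
  (tau_orbit : forall z, Defs.in_orbit act z (tau z))
  (gamma_Lambda : forall a z, gamma (Lambda a z) = tau z)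
  (Lambda_gamma : forall Y, exists a, Y = Lambda a (gamma Y))
  (ip_le_gamma : forall Y Z, ipH Y Z <= ipX (gamma Y) (gamma Z)).
Variable phi : X -> \bar R.
Hypotheses (phi_ninfty : forall z, phi z != -oo%E) (phi_convex : convex_fun phi)
  (phi_inv : s_invariant act phi).

Lemma ip_Lambda a z z' : ipH (Lambda a z) (Lambda a z') = ipX z z'.
Proof. exact: (isometry_ip hX hH (Lambda_iso a)). Qed.

Lemma ip_gamma_gamma Y : ipX (gamma Y) (gamma Y) = ipH Y Y.
Proof. by have [a {3 4}->] := Lambda_gamma Y; rewrite ip_Lambda. Qed.

Lemma gamma_1lipschitz Y Z :
  ipnorm ipX (gamma Y - gamma Z) <= ipnorm ipH (Y - Z).
Proof.
rewrite /ipnorm ler_sqrt ?ipxx_ge0 // !ipBl // !ipBr // !ip_gamma_gamma.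
by rewrite (ipC hX (gamma Z)) (ipC hH Z); have := ip_le_gamma Y Z; lra.
Qed.

Lemma phi_gamma_Lambda a z : phi (gamma (Lambda a z)) = phi z.
Proof.
by rewrite gamma_Lambda; have [s ->] := tau_orbit z; rewrite phi_inv.
Qed.

Lemma ip_Lambda_gamma a z Y :
  Y = Lambda a (gamma Y) -> ipH (Lambda a z) Y = ipX z (gamma Y).
Proof. by move=> {1}->; rewrite ip_Lambda. Qed.

Lemma ip_Lambda_le a z Y : tau z = z -> ipH (Lambda a z) Y <= ipX z (gamma Y).
Proof.
by move=> tau_z; have := ip_le_gamma (Lambda a z) Y; rewrite gamma_Lambda tau_z.
Qed.

Lemma subgradient_tau x a g : x = Lambda a (gamma x) ->
  is_subgradient ipX phi (gamma x) g ->
  is_subgradient ipX phi (gamma x) (tau g).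
Proof.
move=> x_eq sub_g y.
have tau_g_ge : ipX g (gamma x) <= ipX (tau g) (gamma x).
  have := ip_le_gamma x (Lambda a g).
  rewrite gamma_Lambda (ipC hH x) (ip_Lambda_gamma g x_eq).
  by rewrite (ipC hX (gamma x)).
have [s tau_g] := tau_orbit g.
have ip_act : ipX (tau g) y = ipX g (act (inv s) y).
  have [_ _ /(_ s) act_iso] := hact.
  by rewrite tau_g -{1}(actKV hG hact s y) (isometry_ip hX hX act_iso).
rewrite -(phi_inv (inv s) y); apply: le_trans (sub_g _).
by apply: leeD2l; rewrite lee_fin !ipBr // ip_act; lra.
Qed.

Section AtPoint.
Variables (x : H) (a : A).
Hypothesis x_eq : x = Lambda a (gamma x).

Lemma differentiable_of_comp Gr :
  is_gradient ipH (phi \o gamma) x Gr -> differentiable_at ipX phi (gamma x).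
Proof.
move=> grad_Gr; have [L_lin L_norm] := Lambda_iso a.
have [gr gr_repr] := riesz_representation hX (l := fun k => ipH Gr (Lambda a k))
  (fun c u v => ltac:(by rewrite /= L_lin ipDr // ipZr)).
exists gr => eps eps_gt0.
have [delta delta_gt0 Hdelta] := grad_Gr eps eps_gt0.
exists delta => // k k_small.
have Lk_small : ipnorm ipH (Lambda a k) < delta by rewrite L_norm.
have [r0 [r [phix phixk approx]]] := Hdelta _ Lk_small.
exists r0, r; split => //.
  by rewrite -phixk /= -(phi_gamma_Lambda a) (linear_mapD L_lin) -x_eq.
by rewrite gr_repr -L_norm.
Qed.

Variable g : X.
Hypothesis grad_g : is_gradient ipX phi (gamma x) g.

Lemma tau_gradient : tau g = g.
Proof.
apply: (subgradient_gradient hX grad_g); apply: (subgradient_tau x_eq).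
exact: gradient_subgradient.
Qed.

Lemma comp_approx_subgradient h b y : x + h = Lambda b (gamma (x + h)) ->
  (phi (gamma x) + (ipH (Lambda b g) (y - x)
                    - ipH (Lambda b g - Lambda a g) h)%:E <= phi (gamma y))%E.
Proof.
move=> xh_eq; have [r0 phix] := gradient_fin hX grad_g.
apply: le_trans (gradient_subgradient hX phi_ninfty phi_convex grad_g _).
rewrite phix leeD2lE // lee_fin.
have := ip_Lambda_gamma g x_eq; have := ip_Lambda_gamma g xh_eq.
have := ip_Lambda_le b y tau_gradient.
have := ip_Lambda_le a (x + h) tau_gradient.
by rewrite !ipBl // !ipBr // !ipDr //; lra.
Qed.

Lemma subgradient_comp : is_subgradient ipH (phi \o gamma) x (Lambda a g).
Proof.
move=> y; have x0_eq : x + 0 = Lambda a (gamma (x + 0)) by rewrite addr0.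
by have := comp_approx_subgradient y x0_eq; rewrite subrr ip0r // subr0.
Qed.

Lemma Lambda_gradient_gap eps : 0 < eps -> exists2 rho, 0 < rho &
  forall h b, ipnorm ipH h < rho -> x + h = Lambda b (gamma (x + h)) ->
  ipnorm ipH (Lambda b g - Lambda a g) <= eps.
Proof.
move=> eps_gt0; have [L_lin _] := Lambda_iso a.
set ng := ipnorm ipX g; have ng_ge0 : 0 <= ng := ipnorm_ge0 ipX g.
have ng1_gt0 : 0 < ng + 1 by rewrite ltr_wpDl.
pose eps' := eps ^+ 2 / (16 * (ng + 1)).
have eps'_gt0 : 0 < eps' by rewrite divr_gt0 ?exprn_gt0 ?mulr_gt0.
have eps'_ng : eps' * ng <= eps ^+ 2 / 16.
  have : eps' * (16 * (ng + 1)) = eps ^+ 2 by rewrite divfK // gt_eqF ?mulr_gt0.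
  by nra.
have [rho rho_gt0 Hrho] := grad_g eps'_gt0.
pose t := rho / (2 * (ng + 1)).
have t_gt0 : 0 < t by rewrite divr_gt0 ?mulr_gt0.
have tg_small : ipnorm ipX (- (t *: g)) < rho.
  have : t * (2 * (ng + 1)) = rho by rewrite divfK // gt_eqF ?mulr_gt0.
  by rewrite -scaleNr ipnormZ // normrN gtr0_norm // -/ng; nra.
exists (t * eps / 4); first by rewrite divr_gt0 // mulr_gt0.
move=> h b h_small xh_eq.
set ga := Lambda a g; set gb := Lambda b g; set m := ipnorm ipH (gb - ga).
have m_ge0 : 0 <= m := ipnorm_ge0 _ _.
have m_sqr : m ^+ 2 = 2 * ng ^+ 2 - 2 * ipH gb ga.
  rewrite ipnorm_sqr // !ipBl // !ipBr // (ip_Lambda b g g) (ip_Lambda a g g).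
  by rewrite -ipnorm_sqr // -/ng (ipC hH ga); ring.
have [r0 [r [phix phixtg approx]]] := Hrho _ tg_small.
move: approx; rewrite ipNr // ipZr // -ipnorm_sqr // -/ng.
rewrite -scaleNr ipnormZ // normrN (gtr0_norm t_gt0) -/ng ler_norml.
move=> /andP[_ upper].
have lower := comp_approx_subgradient (x - t *: ga) xh_eq.
rewrite (_ : x - t *: ga - x = - (t *: ga)) in lower; last first.
  by rewrite addrAC subrr add0r.
have Lambda_step : Lambda a (gamma x + - (t *: g)) = x - t *: ga.
  by rewrite (linear_mapD L_lin) -scaleNr (linear_mapZ L_lin) -x_eq scaleNr.
rewrite -Lambda_step phi_gamma_Lambda phixtg phix -EFinD lee_fin in lower.
rewrite ipNr // ipZr // -/ga -/gb in lower.
have CS : ipH (gb - ga) h <= m * ipnorm ipH h := cauchy_schwarz hH _ _.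
have p1 : m * ipnorm ipH h <= m * (t * eps / 4) by rewrite ler_wpM2l // ltW.
have p2 : eps' * (t * ng) <= t * (eps ^+ 2 / 16) by rewrite mulrCA ler_pM2l.
have : t * (m ^+ 2 / 2) <= t * (eps ^+ 2 / 16 + m * eps / 4).
  by rewrite m_sqr; lra.
rewrite ler_pM2l //; have [//|eps_lt_m] := lerP m eps; nra.
Qed.

Lemma gradient_comp : is_gradient ipH (phi \o gamma) x (Lambda a g).
Proof.
move=> eps eps_gt0; have eps2_gt0 : 0 < eps / 2 by rewrite divr_gt0.
have [rho1 rho1_gt0 Hrho1] := grad_g eps2_gt0.
have [rho2 rho2_gt0 Hrho2] := Lambda_gradient_gap eps2_gt0.
exists (Order.min rho1 rho2) => [|h]; first by rewrite lt_min rho1_gt0.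
rewrite lt_min => /andP[h_small1 h_small2].
have [b xh_eq] := Lambda_gamma (x + h).
set k := gamma (x + h) - gamma x.
have k_le : ipnorm ipX k <= ipnorm ipH h.
  by have := gamma_1lipschitz (x + h) x; rewrite [x + h - x]addrC addKr.
have [r0 [r [phix phixk approx]]] := Hrho1 k (le_lt_trans k_le h_small1).
rewrite /k addrC subrK in phixk.
exists r0, r; split => //.
have lower := subgradient_comp (x + h).
rewrite /= phix phixk (addrC x) addrK -EFinD lee_fin in lower.
have upper : ipX g k <= ipH (Lambda b g) h.
  have := ip_Lambda_gamma g xh_eq; have := ip_Lambda_le b x tau_gradient.
  by rewrite /k ipBr // ipDr //; lra.
have gap := Hrho2 h b h_small2 xh_eq.
have CS := cauchy_schwarz hH (Lambda b g - Lambda a g) h.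
have h_ge0 := ipnorm_ge0 ipH h.
have p1 : eps / 2 * ipnorm ipX k <= eps / 2 * ipnorm ipH h by rewrite ler_pM2l.
have p2 : ipnorm ipH (Lambda b g - Lambda a g) * ipnorm ipH h
          <= eps / 2 * ipnorm ipH h by rewrite ler_wpM2r.
have p3 : 0 <= eps * ipnorm ipH h by rewrite mulr_ge0 // ltW.
move: approx CS; rewrite ipBl // !ler_norml => /andP[_ approx] CS.
by apply/andP; split; lra.
Qed.

End AtPoint.
End SpectralDecomposition.

Unset Implicit Arguments.

Theorem corollary5p8 (R : realType)
  (H X : vectType R) (ipH : H -> H -> R) (ipX : X -> X -> R)
  (hH : inner_product ipH) (hX : inner_product ipX)
  (G : Type) (mul : G -> G -> G) (one : G) (inv : G -> G)
  (hG : is_group mul one inv)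
  (act : G -> X -> X) (hact : isometric_linear_action mul one ipX act)
  (gamma : H -> X) (A : Type) (Lambda : A -> X -> H)
  (hS : spectral_decomposition_system ipH ipX act gamma Lambda)
  (phi : X -> \bar R)
  (hprop : proper_fun phi) (hconv : convex_fun phi) (hinv : s_invariant act phi)
  (x : H) :
  (differentiable_at ipH (phi \o gamma) x <-> differentiable_at ipX phi (gamma x))
  /\ (forall (Gr : H) (gr : X),
        is_gradient ipH (phi \o gamma) x Gr ->
        is_gradient ipX phi (gamma x) gr ->
        gamma Gr = gr /\
        (forall a : A, x = Lambda a (gamma x) -> Gr = Lambda a gr)).
Proof.
case: hS => Lambda_iso [tau [_ tau_orbit gamma_Lambda]].
move=> Lambda_gamma ip_le_gamma.
have [phi_ninfty _] := hprop.
have [a0 x_eq0] := Lambda_gamma x.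
have grad_comp a gr :
    x = Lambda a (gamma x) -> is_gradient ipX phi (gamma x) gr ->
    is_gradient ipH (phi \o gamma) x (Lambda a gr).
  move=> x_eq; exact: (gradient_comp hH hX hG hact Lambda_iso tau_orbit
    gamma_Lambda Lambda_gamma ip_le_gamma phi_ninfty hconv hinv x_eq).
split.
  split=> [[Gr grad_Gr] | [gr grad_gr]].
    exact: (differentiable_of_comp hH hX Lambda_iso tau_orbit gamma_Lambda
              hinv x_eq0 grad_Gr).
  by exists (Lambda a0 gr); exact: grad_comp.
move=> Gr gr grad_Gr grad_gr; split => [|a x_eq].
  rewrite (gradient_uniq hH grad_Gr (grad_comp a0 gr x_eq0 grad_gr)).
  rewrite gamma_Lambda.
  exact: (tau_gradient hH hX hG hact Lambda_iso tau_orbit gamma_Lambda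
            ip_le_gamma phi_ninfty hconv hinv x_eq0 grad_gr).
exact: (gradient_uniq hH grad_Gr (grad_comp a gr x_eq grad_gr)).
Qed.
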